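(* Let $C=(1,c_2,c_3,c_4,c_5,c_6)$ be a system and $\ell=\lceil c_5/c_3\rceil$, and suppose $C$ satisfies (a), (b), or (c): (a) $C=(1,2,3,c_4,c_4+1,2c_4)$ and $c_4>4$; (b) $C=(1,c_2,2c_2-1,c_4,c_2+c_4-1,2c_4-1)$, $c_4\ge 3c_2-1$, $\mathrm{grd}_C(\ell c_3)\le\ell$, and $\mathrm{grd}_C(\ell c_3)=\ell c_3-c_5+1-\lfloor(\ell c_3-c_5)/c_2\rfloor(c_2-1)$; (c) $C=(1,c_2,2c_2,c_4,c_2+c_4,2c_4)$, $c_4\ge 3c_2-1$, $c_4\ne 3c_2$, $\mathrm{grd}_C(\ell c_3)\le\ell$, and $\mathrm{grd}_C(\ell c_3)=\ell c_3-c_5+1-\lfloor(\ell c_3-c_5)/c_2\rfloor(c_2-1)$. Then $C$ is canonical and the subsystem $(1,c_2,c_3,c_4,c_5)$ is noncanonical.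
   Context: A system is a tuple $C=(c_1,\dots,c_n)$ of integers with $1=c_1<c_2<\dots<c_n$; for $k\le n$, $(c_1,\dots,c_k)$ is a subsystem. For a positive integer $v$, $\mathrm{opt}_C(v)$ is the minimum of $\sum_i x_i$ over $x\in\mathbb{Z}_{\ge0}^n$ with $\sum_i c_ix_i=v$. The greedy representation of $v$ is produced by: for $i=n$ down to $1$, while $c_i\le$ remaining value, take a coin $c_i$. $\mathrm{grd}_C(v)$ is its number of coins. A positive integer $w$ is a counterexample if $\mathrm{opt}_C(w)<\mathrm{grd}_C(w)$; $C$ is canonical if it has none, noncanonical otherwise. *)

From mathcomp Require Import all_boot.
Set Implicit Arguments. Unset Strict Implicit. Unset Printing Implicit Defensive.

Definition is_system (C : seq nat) : Prop :=
  head 0 C = 1 /\ sorted ltn C.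

Definition is_repr (C : seq nat) (x : seq nat) (v : nat) : Prop :=
  size x = size C /\ \sum_(i < size C) nth 0 C i * nth 0 x i = v.

Definition ncoins (x : seq nat) : nat := \sum_(k <- x) k.

Fixpoint grd_desc (cs : seq nat) (v : nat) : nat :=
  match cs with
  | [::] => 0
  | c :: cs' => v %/ c + grd_desc cs' (v %% c)
  end.

Definition grd (C : seq nat) (v : nat) : nat := grd_desc (rev C) v.

Definition counterexample (C : seq nat) (w : nat) : Prop :=
  0 < w /\ exists x, is_repr C x w /\ ncoins x < grd C w.

Definition canonical (C : seq nat) : Prop :=
  forall w, ~ counterexample C w.

Definition noncanonical (C : seq nat) : Prop :=
  exists w, counterexample C w.

From mathcomp Require Import all_boot.
From mathcomp Require Import zify.

(* The system (1, a, P) with 2a - 1 <= P <= 2a has a subadditive greedy cost h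
   with h (x + P) = h x + 1. Any representation for C can be rearranged, without
   more coins, into copies of c6, at most one of c4, c5, and a rest paid greedily
   by (1, a, P): two coins among c4, c5 exceed c6 by an amount that (1, a, P)
   pays with one coin. The greedy of C beats such normal forms as soon as its
   choice of top coin is never worse than another one, a handful of inequalities
   on h; in cases (b) and (c) they follow from subadditivity of h and
   grd (l c3) = 1 + h (l c3 - c5) <= l, in case (a) from the monotonicity of h.
   The subsystem without c6 fails at 2 c4: the greedy takes c5 and then needs at
   least two coins for 2 c4 - c5. *)

Set Implicit Arguments.
Unset Strict Implicit.
Unset Printing Implicit Defensive.

Lemma grd_desc_addmul c cs v k :
  0 < c -> grd_desc (c :: cs) (v + k * c) = grd_desc (c :: cs) v + k.
Proof. by move=> c_gt0; rewrite /= [v + _]addnC divnMDl // modnMDl; lia. Qed.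

Lemma grd_desc_small c cs u : u < c -> grd_desc (c :: cs) u = grd_desc cs u.
Proof. by move=> u_lt; rewrite /= divn_small // modn_small. Qed.

Lemma grd_desc_once c cs u :
  c <= u < 2 * c -> grd_desc (c :: cs) u = (grd_desc cs (u - c)).+1.
Proof.
case/andP=> c_le u_lt; rewrite [in LHS](_ : u = (u - c) + 1 * c); last lia.
rewrite grd_desc_addmul ?grd_desc_small ?addn1 //; lia.
Qed.

Lemma grd_desc1 v : grd_desc [:: 1] v = v.
Proof. by rewrite /= divn1 addn0. Qed.

Lemma repr_invariant (C : seq nat) (Q : nat -> nat -> Prop) :
  Q 0 0 -> (forall v n c, c \in C -> Q v n -> Q (v + c) n.+1) ->
  forall x v, is_repr C x v -> Q v (ncoins x).
Proof.
elim: C => [|c C IH] Q0 Qstep [|j x] v [size_x <-] //.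
  by rewrite big_ord0 /ncoins big_nil.
have Qc n u k : Q u n -> Q (u + c * k) (n + k).
  elim: k => [|k IHk] in n u *; first by rewrite muln0 !addn0.
  by move=> /IHk /(Qstep _ _ c (mem_head _ _)); rewrite mulnS addnS [c + _]addnC addnA.
rewrite big_ord_recl /ncoins big_cons /= addnC [j + _]addnC.
apply: Qc; apply: (IH Q0) => [u n c' c'C|]; first by apply: Qstep; rewrite inE c'C orbT.
by split; [case: size_x|].
Qed.

Lemma canonical_by_invariant (C : seq nat) (Q : nat -> nat -> Prop) :
  Q 0 0 -> (forall v n c, c \in C -> Q v n -> Q (v + c) n.+1) ->
  (forall v n, Q v n -> grd C v <= n) -> canonical C.
Proof.
move=> Q0 Qstep Qgrd w [_ [x [x_repr]]].
by rewrite ltnNge (Qgrd _ _ (repr_invariant Q0 Qstep x_repr)).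
Qed.

Section ThreeCoins.

Variables a P : nat.
Hypotheses (a_gt1 : 1 < a) (P_ge : (2 * a).-1 <= P) (P_le : P <= 2 * a).

Local Notation h := (grd_desc [:: P; a; 1]).

Lemma grd3_addP x k : h (x + k * P) = h x + k.
Proof. by apply: grd_desc_addmul; lia. Qed.

Lemma grd3_lt_a y : y < a -> h y = y.
Proof.
by move=> y_lt; rewrite grd_desc_small; [rewrite grd_desc_small ?grd_desc1 | lia].
Qed.

Lemma grd3_lt_P y : a <= y -> y < P -> h y = (y - a).+1.
Proof.
by move=> a_le y_lt; rewrite grd_desc_small // grd_desc_once ?grd_desc1 //; lia.
Qed.

Lemma grd3_ge_P y : P <= y -> h y = (h (y - P)).+1.
Proof.
by move=> P_le_y; rewrite [in LHS](_ : y = y - P + 1 * P) ?grd3_addP ?addn1 //; lia.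
Qed.

Lemma grd3_modP x : h x = h (x %% P) + x %/ P.
Proof. by rewrite {1}(divn_eq x P) addnC grd3_addP. Qed.

Lemma grd3_lt_P_cases y :
  y < P -> y < a /\ h y = y \/ a <= y /\ h y = (y - a).+1.
Proof.
case: (ltnP y a) => [y_lt | a_le] y_lt_P; first by left; rewrite grd3_lt_a.
by right; rewrite grd3_lt_P.
Qed.

(* The closed form in which cases (b) and (c) state the value of the greedy. *)
Lemma grd3_lt_P_divn y : y < P -> (h y).+1 = y + 1 - y %/ a * (a - 1).
Proof.
move=> y_lt; rewrite grd_desc_small // mulnBr muln1 [grd_desc _ _]/= divn1 addn0.
have := divn_eq y a; have : y %/ a <= y %/ a * a by rewrite leq_pmulr //; lia.
move: (y %/ a) (y %% a) => q r; lia.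
Qed.

Lemma grd3_subadd x y : h (x + y) <= h x + h y.
Proof.
have P_gt0 : 0 < P by lia.
have -> : x + y = x %% P + y %% P + (x %/ P + y %/ P) * P.
  by rewrite {1}(divn_eq x P) {1}(divn_eq y P) mulnDl; lia.
rewrite grd3_addP (grd3_modP x) (grd3_modP y).
suff : h (x %% P + y %% P) <= h (x %% P) + h (y %% P) by lia.
move: (ltn_pmod x P_gt0) (ltn_pmod y P_gt0); move: (x %% P) (y %% P) => r s r_lt s_lt.
have := grd3_lt_P_cases r_lt; have := grd3_lt_P_cases s_lt.
case: (ltnP (r + s) P) => [rs_lt | P_le_rs].
  by have := grd3_lt_P_cases rs_lt; lia.
have rsP_lt : r + s - P < P by lia.
by rewrite (grd3_ge_P P_le_rs); have := grd3_lt_P_cases rsP_lt; lia.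
Qed.

Lemma grd3_le_add_Psub x : h x <= h (x + (P - a)).
Proof.
have P_gt0 : 0 < P by lia.
have -> : x = x %% P + x %/ P * P by rewrite addnC -divn_eq.
rewrite addnAC !grd3_addP leq_add2r.
have : x %% P < P := ltn_pmod x P_gt0; move: (x %% P) => r r_lt.
have := grd3_lt_P_cases r_lt.
case: (ltnP (r + (P - a)) P) => [lt_P | P_le_rP].
  by have := grd3_lt_P_cases lt_P; lia.
have rP_lt : r + (P - a) - P < P by lia.
by rewrite (grd3_ge_P P_le_rP); have := grd3_lt_P_cases rP_lt; lia.
Qed.

Lemma grd3_gt0 y : 0 < y -> 0 < h y.
Proof.
case: (ltnP y P) => [y_lt | P_le_y] y_gt0; last by rewrite grd3_ge_P.
by have := grd3_lt_P_cases y_lt; lia.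
Qed.

Lemma grd3_gt_P y : P < y -> 1 < h y.
Proof. by move=> P_lt; rewrite grd3_ge_P ?ltnS ?grd3_gt0 //; lia. Qed.

Lemma grd3_le1 c : c \in [:: 0; 1; a; P] -> h c <= 1.
Proof.
rewrite !inE => /or4P[] /eqP->.
- by rewrite grd3_lt_a //; lia.
- by rewrite grd3_lt_a.
- by rewrite grd3_lt_P ?subnn //; lia.
- by rewrite grd3_ge_P // subnn grd3_lt_a //; lia.
Qed.

End ThreeCoins.

Section TopCoins.

Variables a P c4 c5 c6 : nat.
Hypotheses (a_gt1 : 1 < a) (P_ge : (2 * a).-1 <= P) (P_le : P <= 2 * a).
Hypotheses (c4_lt_c5 : c4 < c5) (c5_lt_c6 : c5 < c6) (c6_le : c6 <= 2 * c4).

Local Notation C := [:: 1; a; P; c4; c5; c6].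
Local Notation h := (grd_desc [:: P; a; 1]).

Lemma grdC_addc6 v k : grd C (v + k * c6) = grd C v + k.
Proof. by apply: grd_desc_addmul; lia. Qed.

Lemma grdC_lt_c4 u : u < c4 -> grd C u = h u.
Proof.
move=> u_lt; have u_lt5 : u < c5 by lia.
have u_lt6 : u < c6 by lia.
by rewrite /grd [rev _]/= (grd_desc_small _ u_lt6) (grd_desc_small _ u_lt5) grd_desc_small.
Qed.

Lemma grdC_lt_c5 u : c4 <= u < c5 -> grd C u = (h (u - c4)).+1.
Proof.
move=> /andP[c4_le u_lt]; have u_lt6 : u < c6 by lia.
by rewrite /grd [rev _]/= (grd_desc_small _ u_lt6) (grd_desc_small _ u_lt) grd_desc_once //; lia.
Qed.

Lemma grdC_lt_c6 u : c5 <= u < c6 -> grd C u = (h (u - c5)).+1.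
Proof.
move=> /andP[c5_le u_lt]; have u_lt4 : u - c5 < c4 by lia.
by rewrite /grd [rev _]/= (grd_desc_small _ u_lt) grd_desc_once ?(grd_desc_small _ u_lt4) //; lia.
Qed.

Lemma grdC_ge_c6 u : c6 <= u -> grd C u = (grd C (u - c6)).+1.
Proof.
by move=> c6_le_u; rewrite [in LHS](_ : u = u - c6 + 1 * c6) ?grdC_addc6 ?addn1 //; lia.
Qed.

(* For u < c6 the greedy top choice, and for u >= c6 the coin c6, is never worse
   than another top choice (none, c4 or c5) completed greedily by (1, a, P). *)
Hypothesis grd3_add_c6 : forall x, (h x).+1 <= h (x + c6).
Hypothesis grd3_add_c6_c4 : forall x, h x <= h (x + (c6 - c4)).
Hypothesis grd3_add_c6_c5 : forall x, h x <= h (x + (c6 - c5)).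
Hypothesis grd3_c4_add : forall s, s < c5 - c4 -> (h s).+1 <= h (c4 + s).
Hypothesis grd3_c5_add : forall s, s < c6 - c5 -> (h s).+1 <= h (c5 + s).
Hypothesis grd3_add_c5_c4 : forall s, s < c6 - c5 -> h s <= h (s + (c5 - c4)).
Hypothesis grd3_top_pair :
  forall e t, e \in [:: c4; c5] -> t \in [:: c4; c5] -> h (e + t - c6) <= 1.

Lemma grdC_le_grd3 u : grd C u <= h u.
Proof.
elim/ltn_ind: u => u IH; case: (ltnP u c6) => [u_lt6 | c6_le_u].
  case: (ltnP u c4) => [u_lt4 | c4_le_u]; first by rewrite grdC_lt_c4.
  case: (ltnP u c5) => [u_lt5 | c5_le_u].
    by rewrite grdC_lt_c5 ?c4_le_u // -{2}(subnKC c4_le_u) grd3_c4_add //; lia.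
  by rewrite grdC_lt_c6 ?c5_le_u // -{2}(subnKC c5_le_u) grd3_c5_add //; lia.
have lt_u : u - c6 < u by lia.
by rewrite grdC_ge_c6 // -{2}(subnK c6_le_u); apply: leq_trans (grd3_add_c6 _); rewrite ltnS IH.
Qed.

Lemma grdC_le_c4_grd3 u : c4 <= u -> grd C u <= (h (u - c4)).+1.
Proof.
move=> c4_le_u; case: (ltnP u c6) => [u_lt6 | c6_le_u].
  case: (ltnP u c5) => [u_lt5 | c5_le_u]; first by rewrite grdC_lt_c5 ?c4_le_u.
  rewrite grdC_lt_c6 ?c5_le_u // ltnS (_ : u - c4 = u - c5 + (c5 - c4)); last lia.
  by apply: grd3_add_c5_c4; lia.
rewrite grdC_ge_c6 // ltnS (_ : u - c4 = u - c6 + (c6 - c4)); last lia.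
exact: leq_trans (grdC_le_grd3 _) (grd3_add_c6_c4 _).
Qed.

Lemma grdC_le_c5_grd3 u : c5 <= u -> grd C u <= (h (u - c5)).+1.
Proof.
move=> c5_le_u; case: (ltnP u c6) => [u_lt6 | c6_le_u]; first by rewrite grdC_lt_c6 ?c5_le_u.
rewrite grdC_ge_c6 // ltnS (_ : u - c5 = u - c6 + (c6 - c5)); last lia.
exact: leq_trans (grdC_le_grd3 _) (grd3_add_c6_c5 _).
Qed.

Lemma grdC_le_top u e :
  e \in [:: 0; c4; c5] -> e <= u -> grd C u <= (e != 0) + h (u - e).
Proof.
rewrite !inE => /or3P[] /eqP-> e_le; first by rewrite subn0 grdC_le_grd3.
  by have := grdC_le_c4_grd3 e_le; lia.
by have := grdC_le_c5_grd3 e_le; lia.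
Qed.

Definition normal_cost_le v n := exists k e, [/\ e \in [:: 0; c4; c5], k * c6 + e <= v
  & k + (e != 0) + h (v - k * c6 - e) <= n].

Lemma grdC_le_normal v n : normal_cost_le v n -> grd C v <= n.
Proof.
case=> k [e [e_top e_le cost]]; have e_le' : e <= v - k * c6 by lia.
rewrite -(subnK (_ : k * c6 <= v)) ?grdC_addc6; last lia.
by have := grdC_le_top e_top e_le'; lia.
Qed.

Lemma normal_cost_le_add v n c :
  c \in C -> normal_cost_le v n -> normal_cost_le (v + c) n.+1.
Proof.
have top_ge t : t \in [:: c4; c5] -> c4 <= t by rewrite !inE => /orP[] /eqP->; lia.
have subadd := grd3_subadd a_gt1 P_ge P_le.
rewrite (_ : C = [:: 1; a; P] ++ [:: c4; c5] ++ [:: c6]) // !mem_cat mem_seq1.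
move=> /or3P[c_low | c_top | /eqP->] [k [e [e_top e_le cost]]].
- exists k, e; split=> //; first lia.
  rewrite (_ : v + c - k * c6 - e = v - k * c6 - e + c); last lia.
  have : h c <= 1 by apply: grd3_le1; rewrite // inE c_low orbT.
  by have := subadd (v - k * c6 - e) c; lia.
- have c4_le_c := top_ge _ c_top.
  have [e0 | e_nz] := eqVneq e 0.
    exists k, c; split=> //; [by rewrite inE c_top orbT | lia |].
    by rewrite (_ : v + c - k * c6 - c = v - k * c6 - e); lia.
  have e_top' : e \in [:: c4; c5] by move: e_top; rewrite inE (negPf e_nz).
  have c4_le_e := top_ge _ e_top'.
  exists k.+1, 0; split=> //; first by rewrite mulSn; lia.
  rewrite (_ : v + c - k.+1 * c6 - 0 = v - k * c6 - e + (e + c - c6)); last by rewrite mulSn; lia.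
  by have := subadd (v - k * c6 - e) (e + c - c6); have := grd3_top_pair e_top' c_top; lia.
- exists k.+1, e; split=> //; first by rewrite mulSn; lia.
  by rewrite (_ : v + c6 - k.+1 * c6 - e = v - k * c6 - e) // mulSn; lia.
Qed.

Lemma canonical_top : canonical C.
Proof.
apply: (@canonical_by_invariant _ normal_cost_le); last exact: grdC_le_normal.
  by exists 0, 0; rewrite grd3_lt_a //; lia.
exact: normal_cost_le_add.
Qed.

End TopCoins.

Lemma noncanonical_twice_c4 c2 c3 c4 c5 :
  c4 < c5 <= 2 * c4 -> 1 < grd_desc [:: c3; c2; 1] (2 * c4 - c5) ->
  noncanonical [:: 1; c2; c3; c4; c5].
Proof.
move=> /andP[c4_lt c5_le] grd_gt1; exists (2 * c4); split; first lia.
exists [:: 0; 0; 0; 2; 0]; split.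
  by split=> //; rewrite !big_ord_recr big_ord0 /=; lia.
have rest_lt : 2 * c4 - c5 < c4 by lia.
by rewrite /ncoins !big_cons big_nil /grd [rev _]/= grd_desc_once ?(grd_desc_small _ rest_lt) //; lia.
Qed.

Lemma canonical_case_a b : 3 < b -> canonical [:: 1; 2; 3; b; b + 1; 2 * b].
Proof.
move=> b_gt3.
have grd3_mono x k : grd_desc [:: 3; 2; 1] x <= grd_desc [:: 3; 2; 1] (x + k).
  elim: k => [|k IH]; first by rewrite addn0.
  by apply: leq_trans IH _; rewrite addnS -[(x + k).+1]addn1 (@grd3_le_add_Psub 2 3).
have grd3_add3 x : grd_desc [:: 3; 2; 1] (x + 3) = (grd_desc [:: 3; 2; 1] x).+1.
  by rewrite -[3]mul1n (@grd3_addP 2 3) ?addn1.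
have grd3_le3 y : y <= 3 -> grd_desc [:: 3; 2; 1] y <= 1 by case: y => [|[|[|[|]]]].
apply: canonical_top => //; try lia.
- move=> x; rewrite (_ : x + 2 * b = x + 3 + (2 * b - 3)); last lia.
  by rewrite -grd3_add3 grd3_mono.
- move=> s s_lt; rewrite (_ : s = 0) ?addn0; last lia.
  by rewrite (@grd3_lt_a 2 3) ?(@grd3_gt0 2 3) //; lia.
- move=> s s_lt; rewrite (_ : b + 1 + s = s + 3 + (b - 2)); last lia.
  by rewrite -grd3_add3 grd3_mono.
- by move=> e t; rewrite !inE => /orP[] /eqP-> /orP[] /eqP->; apply: grd3_le3; lia.
Qed.

Lemma canonical_case_bc a P c4 c5 c6 l d :
  1 < a -> (2 * a).-1 <= P -> P <= 2 * a -> P < c4 ->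
  c5 + a = c4 + P -> c6 + a = c4 + c5 ->
  l * P = c5 + d -> d < P -> (grd_desc [:: P; a; 1] d).+1 <= l ->
  canonical [:: 1; a; P; c4; c5; c6].
Proof.
(* Each condition of [canonical_top] is subadditivity of the greedy of (1, a, P)
   around c5 + d = l * P. *)
move=> a_gt1 P_ge P_le P_lt_c4 c5E c6E.
case: l => [|m] lE d_lt hd_le; first lia.
rewrite mulSn in lE.
have subadd := grd3_subadd a_gt1 P_ge P_le.
have addP := grd3_addP a_gt1 P_ge P_le.
have grd3_a : grd_desc [:: P; a; 1] a <= 1 by apply: grd3_le1; rewrite // !inE eqxx !orbT.
apply: canonical_top => //; try lia.
- move=> x; have := subadd (x + c6) (d + d).
  rewrite (_ : x + c6 + (d + d) = x + (2 * m + 1) * P) ?addP; last lia.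
  by have := subadd d d; lia.
- move=> x; have := subadd (x + (c6 - c4)) (a + d).
  rewrite (_ : x + (c6 - c4) + (a + d) = x + m.+1 * P) ?addP; last lia.
  by have := subadd a d; lia.
- move=> x; have := subadd (x + (c6 - c5)) d.
  by rewrite (_ : x + (c6 - c5) + d = x + m * P) ?addP; lia.
- move=> s s_lt; have := subadd (c4 + s) d.
  rewrite (_ : c4 + s + d = a + s + m * P) ?addP; last lia.
  have s_lt_a : s < a by lia.
  have as_lt_P : a + s < P by lia.
  rewrite (grd3_lt_P a_gt1 P_ge P_le (leq_addr s a) as_lt_P).
  by rewrite (grd3_lt_a a_gt1 P_ge P_le s_lt_a); lia.
- move=> s s_lt; have := subadd (c5 + s) d.
  by rewrite (_ : c5 + s + d = s + m.+1 * P) ?addP; lia.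
- move=> s s_lt; rewrite (_ : c5 - c4 = P - a); last lia.
  exact: grd3_le_add_Psub.
- move=> e t; rewrite !inE => /orP[] /eqP-> /orP[] /eqP->; apply: grd3_le1 => //; rewrite !inE; lia.
Qed.

Lemma divn_ceil_bounds m d : 0 < d -> m <= (m + d - 1) %/ d * d < m + d.
Proof.
move=> d_gt0; have := leq_divM (m + d - 1) d.
by have := ltn_ceil (m + d - 1) d_gt0; rewrite mulSn; lia.
Qed.

Theorem theorem10 (c2 c3 c4 c5 c6 : nat) :
  let C := [:: 1; c2; c3; c4; c5; c6] in
  let l := (c5 + c3 - 1) %/ c3 in
  is_system C ->
  [/\ c2 = 2, c3 = 3, c5 = c4 + 1, c6 = 2 * c4 & 4 < c4]
  \/ ([/\ c3 = 2 * c2 - 1, c5 = c2 + c4 - 1, c6 = 2 * c4 - 1 & 3 * c2 - 1 <= c4]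
      /\ grd C (l * c3) <= l
      /\ grd C (l * c3) = l * c3 - c5 + 1 - ((l * c3 - c5) %/ c2) * (c2 - 1))
  \/ ([/\ c3 = 2 * c2, c5 = c2 + c4, c6 = 2 * c4, 3 * c2 - 1 <= c4 & c4 != 3 * c2]
      /\ grd C (l * c3) <= l
      /\ grd C (l * c3) = l * c3 - c5 + 1 - ((l * c3 - c5) %/ c2) * (c2 - 1)) ->
  canonical C /\ noncanonical [:: 1; c2; c3; c4; c5].
Proof.
move=> C l [_] /= /and5P[c2_gt1 c2_lt c3_lt c4_lt /andP[c5_lt _]].
case=> [[c2E c3E c5E c6E c4_gt4] | [[[c3E c5E c6E c4_ge] grd_l] | [[c3E c5E c6E c4_ge c4_ne] grd_l]]].
  subst; split; first by apply: canonical_case_a; lia.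
  apply: noncanonical_twice_c4; first lia.
  by apply: (@grd3_gt_P 2 3) => //; lia.
all: have [c3_ge c3_le] : (2 * c2).-1 <= c3 /\ c3 <= 2 * c2 by lia.
all: have c3_gt0 : 0 < c3 by lia.
all: have /andP[c5_le l_lt] := divn_ceil_bounds c5 c3_gt0; rewrite -/l in c5_le l_lt.
all: have d_lt : l * c3 - c5 < c3 by lia.
all: have hd_le : (grd_desc [:: c3; c2; 1] (l * c3 - c5)).+1 <= l
  by case: grd_l => grd_le grd_E; rewrite (grd3_lt_P_divn c2_gt1 c3_ge c3_le d_lt) -grd_E.
all: split; first by apply: (canonical_case_bc c2_gt1 c3_ge c3_le c3_lt _ _ _ d_lt hd_le); lia.
all: apply: noncanonical_twice_c4; first lia.
  by apply: (grd3_gt_P c2_gt1 c3_ge c3_le); lia.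
case: (ltnP (3 * c2) c4) => [c4_gt | c4_le].
  by apply: (grd3_gt_P c2_gt1 c3_ge c3_le); lia.
have c4E : c4 = 3 * c2 - 1 by lia.
have [y_ge y_lt] : c2 <= 2 * c4 - c5 /\ 2 * c4 - c5 < c3 by lia.
by rewrite (grd3_lt_P c2_gt1 c3_ge c3_le y_ge y_lt); lia.
Qed.
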